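(* Let $d\ge7$, $\epsilon>0$ and $\Delta\ge\sqrt d\,\epsilon$. Let $\Gamma\subseteq\{-1,1\}^{d-1}$ be a set such that any two distinct $x,y\in\Gamma$ satisfy $\sum_{j=1}^{d-1}\mathbf 1\{x_j\ne y_j\}>\frac{d-1}4$, and define \[ \Theta=\{(\Delta,\epsilon u_1,\dots,\epsilon u_{d-1}):(u_1,\dots,u_{d-1})\in\Gamma\}\subset\mathbb R^d. \] Then for all $\theta\ne\theta'\in\Theta$, the internal angle satisfies \[ \frac{\sqrt{d-1}\,\epsilon}{2\Delta}\le\angle(\theta,\theta')\le\frac\pi2. \]
   Context: For nonzero $\theta,\theta'\in\mathbb R^d$, the internal angle is $\angle(\theta,\theta')=\arccos\big(\langle\theta,\theta'\rangle/(\|\theta\|\|\theta'\|)\big)\in[0,\pi]$, with the Euclidean inner product and norm. *)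

From HB Require Import structures.
From mathcomp Require Import all_boot all_order all_algebra.
From mathcomp Require Import all_classical all_reals.
From mathcomp Require Import trigo.
Set Implicit Arguments. Unset Strict Implicit. Unset Printing Implicit Defensive.
Import Order.TTheory GRing.Theory Num.Theory.
Local Open Scope ring_scope.

Definition dotR {R : realType} (d : nat) (x y : 'I_d -> R) : R :=
  \sum_(i < d) x i * y i.
Definition normR {R : realType} (d : nat) (x : 'I_d -> R) : R :=
  Num.sqrt (dotR x x).
Definition angle {R : realType} (d : nat) (x y : 'I_d -> R) : R :=
  acos (dotR x y / (normR x * normR y)).

(* Hamming distance between sign vectors, encoded as booleans
   (true = +1, false = -1) *)
Definition hamming (n : nat) (x y : {ffun 'I_n -> bool}) : nat :=
  #|[set j | x j != y j]|.

(* k-th coordinate (0-based) of the sign vector u in {-1,1}^(d-1) *)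
Definition usign {R : realType} (n : nat) (u : {ffun 'I_n -> bool}) (k : nat) : R :=
  if @insub _ (fun m => m < n)%N _ k is Some j then (if u j then 1 else -1) else 0.

Definition theta_of {R : realType} (d : nat) (Delta eps : R)
  (u : {ffun 'I_(d - 1) -> bool}) : 'I_d -> R :=
  fun i => if val i == 0%N then Delta else eps * usign u (val i).-1.

From HB Require Import structures.
From mathcomp Require Import all_boot all_order all_algebra.
From mathcomp Require Import all_classical all_reals.
From mathcomp Require Import all_analysis ring lra.
Import Order.TTheory GRing.Theory Num.Theory.
Local Open Scope ring_scope.

(** The first coordinate Delta dominates, so every theta has squared norm
    [Delta^2 + eps^2 (d-1)] and two of them have inner product
    [Delta^2 + eps^2 (d-1-2h)], h being the Hamming distance of their sign
    vectors. Since h <= d-1 and (d-1) eps^2 <= Delta^2 the cosine of the angle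
    is nonnegative, whence the angle is at most pi/2; since h > (d-1)/4 the
    cosine is at most [1 - x^2/2] with [x = sqrt(d-1) eps / (2 Delta)], and
    [1 - x^2/2 <= cos x] together with the monotonicity of cos on [0, pi]
    gives the lower bound x. *)

Section Trigonometry.
Context {R : realType}.

Lemma sqr_sin_le (x : R) : sin x ^+ 2 <= x ^+ 2.
Proof.
wlog x_ge0 : x / 0 <= x.
  move=> Hpos; have [/Hpos //|/ltW] := leP 0 x.
  by rewrite -oppr_ge0 => /Hpos; rewrite sinN !sqrrN.
move: x_ge0; rewrite le0r => /predU1P[->|x_gt0]; first by rewrite sin0 expr0n.
have [|c _ sinE] := MVT x_gt0 (fun z _ => is_derive_sin z).
  by apply: derivable_within_continuous => z _; exact: derivable_sin.
have cos2_le1 : cos c ^+ 2 <= 1 by rewrite cos2sin2 gerBl sqr_ge0.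
rewrite sin0 !subr0 in sinE.
by rewrite sinE exprMn -[leRHS]mul1r ler_pM2r // exprn_gt0.
Qed.

Lemma one_sub_sqr_half_le_cos (x : R) : 1 - x ^+ 2 / 2 <= cos x.
Proof.
have := sqr_sin_le (x / 2); set t := x / 2 => sin_t_le.
have -> : x = t *+ 2 by rewrite /t -mulr_natr mulfVK.
rewrite cos_mulr2n cos2sin2.
have -> : 1 - (t *+ 2) ^+ 2 / 2 = 1 - 2 * t ^+ 2 by rewrite mulr2n; field.
rewrite !mulr2n; lra.
Qed.

Lemma le_acos_of_le_cos (x c : R) :
  x \in `[0, pi] -> -1 <= c <= 1 -> c <= cos x -> x <= acos c.
Proof.
move=> x_0pi c_11 c_le; rewrite leNgt -ltr_cos //.
  by rewrite acosK ?in_itv // -leNgt.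
by rewrite in_itv /= acos_ge0 // acos_lepi.
Qed.

Lemma acos_le_of_cos_le (x c : R) :
  x \in `[0, pi] -> -1 <= c <= 1 -> cos x <= c -> acos c <= x.
Proof.
move=> x_0pi c_11 le_c; rewrite leNgt -ltr_cos //.
  by rewrite acosK ?in_itv // -leNgt.
by rewrite in_itv /= acos_ge0 // acos_lepi.
Qed.

End Trigonometry.

Lemma usignE (R : realType) n (u : {ffun 'I_n -> bool}) (j : 'I_n) :
  usign u j = (if u j then 1 else -1 : R).
Proof. by rewrite /usign valK. Qed.

Lemma hamming_sum (R : realType) n (u u' : {ffun 'I_n -> bool}) :
  (hamming u u')%:R = \sum_(i < n) (u i != u' i)%:R :> R.
Proof.
rewrite -natr_sum /hamming -sum1_card big_mkcond /=; congr (_%:R).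
by apply: eq_bigr => i _; rewrite inE; case: (u i != u' i).
Qed.

Lemma hamming_leq n (u u' : {ffun 'I_n -> bool}) : (hamming u u' <= n)%N.
Proof. by rewrite /hamming -[leqRHS]card_ord max_card. Qed.

Lemma hammingxx n (u : {ffun 'I_n -> bool}) : hamming u u = 0%N.
Proof.
by apply/eqP; rewrite cards_eq0; apply/eqP/setP => j; rewrite !inE eqxx.
Qed.

Definition theta_cos {R : realType} (Delta eps n h : R) : R :=
  (Delta ^+ 2 + eps ^+ 2 * (n - 2 * h)) / (Delta ^+ 2 + eps ^+ 2 * n).

Section ThetaVectors.
Variables (R : realType) (d : nat) (Delta eps : R).
Hypothesis d_gt0 : (0 < d)%N.

Lemma dotR_theta_of (u u' : {ffun 'I_(d - 1) -> bool}) :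
  dotR (theta_of Delta eps u) (theta_of Delta eps u') =
  Delta ^+ 2 + eps ^+ 2 * ((d - 1)%:R - 2 * (hamming u u')%:R).
Proof.
pose G k := (if k == 0%N then Delta else eps * usign u k.-1) *
            (if k == 0%N then Delta else eps * usign u' k.-1).
have -> : dotR (theta_of Delta eps u) (theta_of Delta eps u') =
          \sum_(0 <= k < d) G k by rewrite big_mkord.
rewrite big_ltn // big_add1 -subn1 big_mkord /G /= expr2; congr (_ + _).
have -> : (d - 1)%:R = \sum_(i < d - 1) (1 : R) by rewrite sumr_const card_ord.
rewrite hamming_sum mulr_sumr -sumrB mulr_sumr.
apply: eq_bigr => i _; rewrite !usignE.
by case: (u i); case: (u' i) => /=; lra.
Qed.

Lemma angle_theta_of (u u' : {ffun 'I_(d - 1) -> bool}) :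
  angle (theta_of Delta eps u) (theta_of Delta eps u') =
  acos (theta_cos Delta eps (d - 1)%:R (hamming u u')%:R).
Proof.
have N_ge0 : 0 <= Delta ^+ 2 + eps ^+ 2 * (d - 1)%:R.
  by apply: addr_ge0; [exact: sqr_ge0 | exact: mulr_ge0 (sqr_ge0 _) (ler0n _ _)].
rewrite /angle /normR !dotR_theta_of !hammingxx mulr0 subr0.
by rewrite -expr2 sqr_sqrtr.
Qed.

End ThetaVectors.

Section ThetaCosine.
Variables (R : realType) (Delta eps n h : R).

Lemma theta_cos_ge0 :
  0 <= n -> n * eps ^+ 2 <= Delta ^+ 2 -> h <= n ->
  0 <= theta_cos Delta eps n h.
Proof.
move=> n_ge0 n_eps2_le h_le_n.
have : 0 <= eps ^+ 2 * n by rewrite mulr_ge0 ?sqr_ge0.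
have : 0 <= eps ^+ 2 * (n - h) by rewrite mulr_ge0 ?sqr_ge0 ?subr_ge0.
by move=> *; apply: divr_ge0; lra.
Qed.

Lemma theta_cos_le1 :
  0 < Delta -> 0 <= n -> 0 <= h -> theta_cos Delta eps n h <= 1.
Proof.
move=> Delta_gt0 n_ge0 h_ge0.
have : 0 < Delta ^+ 2 + eps ^+ 2 * n.
  by rewrite ltr_pwDl ?exprn_gt0 // mulr_ge0 ?sqr_ge0.
have : 0 <= eps ^+ 2 * h by rewrite mulr_ge0 ?sqr_ge0.
by move=> *; rewrite ler_pdivrMr // mul1r; lra.
Qed.

Lemma theta_cos_le_quadratic :
  0 < Delta -> 0 <= n -> n * eps ^+ 2 <= Delta ^+ 2 -> n < 4 * h ->
  theta_cos Delta eps n h <= 1 - (Num.sqrt n * eps / (2 * Delta)) ^+ 2 / 2.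
Proof.
move=> Delta_gt0 n_ge0 n_eps2_le n_lt_4h; set x := _ / (2 * Delta).
have N_gt0 : 0 < Delta ^+ 2 + eps ^+ 2 * n.
  by rewrite ltr_pwDl ?exprn_gt0 // mulr_ge0 ?sqr_ge0.
have gapE : 1 - x ^+ 2 / 2 - theta_cos Delta eps n h =
    eps ^+ 2 * (4 * Delta ^+ 2 * (4 * h - n) + 2 * n * Delta ^+ 2 +
                n * (Delta ^+ 2 - n * eps ^+ 2)) /
    (8 * Delta ^+ 2 * (Delta ^+ 2 + eps ^+ 2 * n)).
  rewrite /x /theta_cos !exprMn sqr_sqrtr // exprVn.
  by field; rewrite !gt_eqF.
rewrite -subr_ge0 gapE; apply: divr_ge0.
  apply: mulr_ge0; first exact: sqr_ge0.
  have : 0 <= Delta ^+ 2 * (4 * h - n).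
    by rewrite mulr_ge0 ?sqr_ge0 // subr_ge0 ltW.
  have : 0 <= n * (Delta ^+ 2 - n * eps ^+ 2) by rewrite mulr_ge0 // subr_ge0.
  have := mulr_ge0 n_ge0 (sqr_ge0 Delta).
  lra.
by rewrite ltW // mulr_gt0 // mulr_gt0 // exprn_gt0.
Qed.

Lemma theta_cos_itv :
  0 < Delta -> 0 <= n -> n * eps ^+ 2 <= Delta ^+ 2 -> 0 <= h <= n ->
  -1 <= theta_cos Delta eps n h <= 1.
Proof.
move=> Delta_gt0 n_ge0 n_eps2_le /andP[h_ge0 h_le_n].
rewrite theta_cos_le1 // andbT.
exact: le_trans (lerN10 R) (theta_cos_ge0 _ _ _).
Qed.

Lemma acos_theta_cos_le_pihalf :
  0 < Delta -> 0 <= n -> n * eps ^+ 2 <= Delta ^+ 2 -> 0 <= h <= n ->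
  acos (theta_cos Delta eps n h) <= pi / 2.
Proof.
move=> Delta_gt0 n_ge0 n_eps2_le h_0n; have pi_ge2 := pi_ge2 R.
apply: acos_le_of_cos_le; last 1 first.
- by rewrite cos_pihalf theta_cos_ge0 //; case/andP: h_0n.
- by rewrite in_itv /=; apply/andP; split; lra.
- exact: theta_cos_itv.
Qed.

Lemma le_acos_theta_cos :
  0 < Delta -> 0 <= n -> n * eps ^+ 2 <= Delta ^+ 2 -> 0 <= eps ->
  h <= n -> n < 4 * h ->
  Num.sqrt n * eps / (2 * Delta) <= acos (theta_cos Delta eps n h).
Proof.
move=> Delta_gt0 n_ge0 n_eps2_le eps_ge0 h_le_n n_lt_4h; have pi_ge2 := pi_ge2 R.
have sqrt_n_eps_le : Num.sqrt n * eps <= Delta.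
  rewrite -(ler_pXn2r (_ : 0 < 2)%N) ?nnegrE ?exprMn ?sqr_sqrtr ?mulr_ge0 //.
  exact: ltW.
apply: le_acos_of_le_cos.
- have x_le1 : Num.sqrt n * eps / (2 * Delta) <= 1.
    by rewrite ler_pdivrMr ?mul1r; lra.
  by rewrite in_itv /= divr_ge0 ?mulr_ge0 ?(ltW Delta_gt0) //=; lra.
- by apply: theta_cos_itv => //; apply/andP; split; lra.
- exact: le_trans (theta_cos_le_quadratic _ _ _ _) (one_sub_sqr_half_le_cos _).
Qed.

End ThetaCosine.

Theorem lemma5 (R : realType) (d : nat) (eps Delta : R)
  (Gamma : {set {ffun 'I_(d - 1) -> bool}}) :
  (7 <= d)%N -> 0 < eps -> Num.sqrt (d%:R) * eps <= Delta ->
  (forall x y, x \in Gamma -> y \in Gamma -> x != y ->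
     (d - 1)%:R / 4 < (hamming x y)%:R :> R) ->
  forall th th' : 'I_d -> R,
    (exists2 u, u \in Gamma & th = theta_of Delta eps u) ->
    (exists2 u, u \in Gamma & th' = theta_of Delta eps u) ->
    th <> th' ->
    Num.sqrt ((d - 1)%:R) * eps / (2 * Delta) <= angle th th' /\
    angle th th' <= pi / 2.
Proof.
move=> d_ge7 eps_gt0 Delta_ge Gamma_sep _ _ [u uG ->] [u' u'G ->] th_neq.
have d_gt0 : (0 < d)%N by apply: leq_trans d_ge7.
have u_neq : u != u' by apply/eqP; apply: contra_not th_neq => ->.
have h_gt := Gamma_sep _ _ uG u'G u_neq.
have h_le : (hamming u u')%:R <= (d - 1)%:R :> R by rewrite ler_nat hamming_leq.
have d_eps2 : d%:R * eps ^+ 2 = (Num.sqrt d%:R * eps) ^+ 2.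
  by rewrite exprMn sqr_sqrtr.
have Delta_gt0 : 0 < Delta.
  by apply: lt_le_trans Delta_ge; rewrite mulr_gt0 // sqrtr_gt0 ltr0n.
have n_eps2_le : (d - 1)%:R * eps ^+ 2 <= Delta ^+ 2.
  apply: le_trans (_ : d%:R * eps ^+ 2 <= _).
    by rewrite ler_wpM2r ?sqr_ge0 // ler_nat leq_subr.
  rewrite d_eps2 ler_pXn2r ?nnegrE ?(ltW Delta_gt0) //.
  by rewrite mulr_ge0 ?sqrtr_ge0 ?(ltW eps_gt0).
rewrite angle_theta_of //; split.
  by apply: le_acos_theta_cos => //; [exact: ltW | lra].
by apply: acos_theta_cos_le_pihalf => //; rewrite ler0n h_le.
Qed.
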